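(* Let $\Gamma$ be a discrete subgroup of $E(n)$, and suppose $\dim\Gamma\ge n-1$. Then $\dim\Gamma_T=\dim\Gamma$.
   Context: $E(n)$ denotes the group of isometries of $\mathbb{R}^n$; each $\gamma\in E(n)$ has the form $x\mapsto Ax+a$ with $A\in O(n)$, and $\operatorname{ort}(\gamma)=A$. $E(n)$ has the topology of $O(n)\times\mathbb{R}^n$. $\Gamma_T=\{\gamma\in\Gamma:\operatorname{ort}(\gamma)=\mathrm{id}\}$ is the translation subgroup. For a discrete $H\le E(n)$, a subgroup $H'\le H$ and an affine subspace $V$, $(H',V)$ is a cocompact translation pair of $H$ if $gV=V$ and $g|_V$ is a translation of $V$ for all $g\in H'$, and $V/H'$ is compact; it is a finite index cocompact translation pair if moreover $[H:H']<\infty$. Such pairs always exist and $\dim H:=\dim V$ for any such pair (independent of choice). *)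

From Stdlib Require Import Reals List.
From mathcomp Require Import all_boot.
Unset Printing Implicit Defensive.
Open Scope R_scope.

Definition vec (n : nat) := 'I_n -> R.
Definition mat (n : nat) := 'I_n -> 'I_n -> R.

Definition sumR {k : nat} (f : 'I_k -> R) : R := foldr Rplus 0 (map f (enum 'I_k)).

Definition mulmv {n : nat} (A : mat n) (x : vec n) : vec n :=
  fun i => sumR (fun j => A i j * x j).
Definition mulmm {n : nat} (A B : mat n) : mat n :=
  fun i j => sumR (fun l => A i l * B l j).
Definition trm {n : nat} (A : mat n) : mat n := fun i j => A j i.
Definition idm (n : nat) : mat n := fun i j => if i == j then 1 else 0.
Definition orthogonal {n : nat} (A : mat n) : Prop := mulmm (trm A) A = idm n.

Definition vadd {n : nat} (x y : vec n) : vec n := fun i => x i + y i.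
Definition vsub {n : nat} (x y : vec n) : vec n := fun i => x i - y i.
Definition vnorm {n : nat} (x : vec n) : R := sqrt (sumR (fun i => x i * x i)).

(* An element (A, a) of E(n) is the isometry x |-> A x + a, with A in O(n). *)
Definition isom (n : nat) := (mat n * vec n)%type.
Definition ort {n : nat} (g : isom n) : mat n := fst g.
Definition in_En {n : nat} (g : isom n) : Prop := orthogonal (fst g).
Definition act {n : nat} (g : isom n) (x : vec n) : vec n := vadd (mulmv (fst g) x) (snd g).
Definition comp {n : nat} (g h : isom n) : isom n :=
  (mulmm (fst g) (fst h), vadd (mulmv (fst g) (snd h)) (snd g)).
Definition inv {n : nat} (g : isom n) : isom n :=
  (trm (fst g), fun i => - mulmv (trm (fst g)) (snd g) i).
Definition iso_id (n : nat) : isom n := (idm n, fun _ => 0).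

Definition is_subgroup {n : nat} (G : isom n -> Prop) : Prop :=
  (forall g, G g -> in_En g) /\ G (iso_id n) /\
  (forall g h, G g -> G h -> G (comp g h)) /\
  (forall g, G g -> G (inv g)).

(* metric inducing the topology of O(n) x R^n (subspace of R^(n*n) x R^n) *)
Definition iso_dist {n : nat} (g h : isom n) : R :=
  sumR (fun i => sumR (fun j => Rabs (fst g i j - fst h i j)))
  + sumR (fun i => Rabs (snd g i - snd h i)).

Definition discrete {n : nat} (G : isom n -> Prop) : Prop :=
  forall g, G g -> exists eps, 0 < eps /\
    forall h, G h -> iso_dist g h < eps -> h = g.

Definition transl_subgroup {n : nat} (G : isom n -> Prop) : isom n -> Prop :=
  fun g => G g /\ ort g = idm n.

Definition lin_comb {n k : nat} (w : 'I_k -> vec n) (t : 'I_k -> R) : vec n :=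
  fun i => sumR (fun j => t j * w j i).
Definition affine_subspace_of_dim {n : nat} (V : vec n -> Prop) (k : nat) : Prop :=
  exists (p : vec n) (w : 'I_k -> vec n),
    (forall t, lin_comb w t = (fun _ => 0) -> forall j, t j = 0) /\
    (forall x, V x <-> exists t, x = vadd p (lin_comb w t)).
Definition affine_subspace {n : nat} (V : vec n -> Prop) : Prop :=
  exists k, affine_subspace_of_dim V k.

(* V / H' compact: there is a compact (closed ball) set K with V = H' K *)
Definition cocompact_quotient {n : nat} (H' : isom n -> Prop) (V : vec n -> Prop) : Prop :=
  exists (x0 : vec n) (r : R), forall x, V x ->
    exists g, H' g /\ V (act g x) /\ vnorm (vsub (act g x) x0) <= r.

Definition cocompact_translation_pair {n : nat} (H H' : isom n -> Prop)
    (V : vec n -> Prop) : Prop :=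
  is_subgroup H' /\ (forall g, H' g -> H g) /\ affine_subspace V /\
  (forall g, H' g ->
     (forall x, V x -> V (act g x)) /\
     (forall y, V y -> exists x, V x /\ act g x = y) /\
     (exists v : vec n, forall x, V x -> act g x = vadd x v)) /\
  cocompact_quotient H' V.

Definition finite_index {n : nat} (H H' : isom n -> Prop) : Prop :=
  exists l : list (isom n), (forall g, In g l -> H g) /\
    forall h, H h -> exists g, In g l /\ exists h', H' h' /\ h = comp g h'.

(* "dim H = k": some finite index cocompact translation pair (H', V) of H has dim V = k
   (dim H is independent of the choice of pair). *)
Definition has_dim {n : nat} (H : isom n -> Prop) (k : nat) : Prop :=
  exists (H' : isom n -> Prop) (V : vec n -> Prop),
    cocompact_translation_pair H H' V /\ finite_index H H' /\ affine_subspace_of_dim V k.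

(* Let (H, V) be a finite index cocompact translation pair of Gamma with dim V >= n - 1.
   The linear part of every element of H is an orthogonal map fixing the direction space
   of V pointwise.  Such a map preserves the orthogonal complement, a line at most, and acts
   on it by +1 or -1; so it is the identity or the reflection in that hyperplane, and all
   non-translations of H have the same linear part.  The translations of H therefore have
   index at most two in H, and together with V they form a finite index cocompact
   translation pair of Gamma_T. *)

From Pilot Require Import Defs.
From Stdlib Require Import Reals List.
From Stdlib Require Import Lra Classical ClassicalDescription FunctionalExtensionality.
From mathcomp Require Import all_boot.
From mathcomp Require Import all_algebra Rstruct.
Import GRing.Theory Num.Theory.
Set Implicit Arguments.
Unset Strict Implicit.
Unset Printing Implicit Defensive.
Local Open Scope ring_scope.

Lemma mulmx_trmx_self_eq0 (F : realFieldType) n (v : 'rV[F]_n) :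
  v *m v^T = 0 -> v = 0.
Proof.
move/matrixP/(_ 0 0)/eqP; rewrite !mxE psumr_eq0 => [/allP v0|i _]; last first.
  by rewrite !mxE -expr2 sqr_ge0.
apply/rowP => i; apply/eqP; have := v0 i (mem_index_enum i).
by rewrite !mxE mulf_eq0 orbb.
Qed.

Lemma capmx_kermx_tr (F : realFieldType) m n (W : 'M[F]_(m, n)) :
  (W :&: kermx W^T)%MS = 0.
Proof.
apply/eqP/rowV0P => v; rewrite sub_capmx => /andP[/submxP[D ->] /sub_kermxP DW0].
by apply: mulmx_trmx_self_eq0; rewrite trmx_mul mulmxA DW0 mul0mx.
Qed.

Section OrthogonalFixingHyperplane.
Variables (F : realFieldType) (n k : nat) (W : 'M[F]_(k, n)).
Hypothesis rankW : (n <= (\rank W).+1)%N.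

Lemma row_full_col_mx_perp (v : 'rV[F]_n) :
  (v <= kermx W^T)%MS -> v != 0 -> row_full (col_mx W v).
Proof.
move=> vperp vn0; have Wv0 : (W :&: v)%MS = 0.
  by apply/eqP; rewrite -submx0 -(capmx_kermx_tr W) capmxS.
by rewrite /row_full -addsmxE eqn_leq rank_leq_col mxrank_disjoint_sum // rank_rV vn0 addn1.
Qed.

Lemma orthogonal_fix_mul_tr (B : 'M[F]_n) :
  B *m B^T = 1%:M -> W *m B = W -> B *m W^T = W^T.
Proof. by move=> oB WB; rewrite -{1}WB trmx_mul mulmxA oB mul1mx. Qed.

Lemma orthogonal_fix_reflects_perp (B : 'M[F]_n) (v : 'rV[F]_n) :
  B *m B^T = 1%:M -> W *m B = W -> B != 1%:M ->
  (v <= kermx W^T)%MS -> v *m B = - v.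
Proof.
move=> oB WB Bn1 vperp; have [->|vn0] := eqVneq v 0; first by rewrite mul0mx oppr0.
have perp_sub_v : (kermx W^T <= v)%MS.
  rewrite -(mxrank_leqif_sup vperp).2 eqn_leq mxrankS // rank_rV vn0.
  by rewrite mxrank_ker mxrank_tr leq_subLR addn1.
have /sub_rVP[s vB] : (v *m B <= v)%MS.
  apply: submx_trans perp_sub_v; apply/sub_kermxP.
  by rewrite -mulmxA orthogonal_fix_mul_tr //; apply/sub_kermxP.
have vvT_n0 : v *m v^T != 0 by apply: contra vn0 => /eqP/mulmx_trmx_self_eq0->.
have /eqP : (s ^+ 2 - 1) *: (v *m v^T) = 0.
  rewrite scalerBl scale1r expr2 -scalerA scalemxAl -vB scalemxAr -linearZ /= -vB.
  by rewrite trmx_mul !mulmxA -(mulmxA v) oB mulmx1 subrr.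
rewrite scalemx_eq0 (negPf vvT_n0) orbF subr_eq0 sqrf_eq1 => /orP[]/eqP s1.
  case/negP: Bn1; apply/eqP/(row_full_inj (row_full_col_mx_perp vperp vn0)).
  by rewrite mul_col_mx WB vB s1 scale1r mulmx1.
by rewrite vB s1 scaleN1r.
Qed.

Lemma orthogonal_fix_eq (B1 B2 : 'M[F]_n) :
  B1 *m B1^T = 1%:M -> B2 *m B2^T = 1%:M -> W *m B1 = W -> W *m B2 = W ->
  B1 != 1%:M -> B2 != 1%:M -> B1 = B2.
Proof.
move=> oB1 oB2 WB1 WB2 B1n1 B2n1; set v := nz_row (B1 - 1%:M).
have vperp : (v <= kermx W^T)%MS.
  apply: submx_trans (nz_row_sub _) _; apply/sub_kermxP.
  by rewrite mulmxBl orthogonal_fix_mul_tr // mul1mx subrr.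
have vn0 : v != 0 by rewrite nz_row_eq0 subr_eq0.
apply: (row_full_inj (row_full_col_mx_perp vperp vn0)).
by rewrite !mul_col_mx WB1 WB2 !(orthogonal_fix_reflects_perp _ _ _ vperp).
Qed.
End OrthogonalFixingHyperplane.

Lemma sumR_sum k (f : 'I_k -> R) : sumR f = \sum_i f i.
Proof. by rewrite /sumR unlock /reducebig /index_enum -enumT; elim: (enum _) => //= a l ->. Qed.

Definition mx {n} (A : mat n) : 'M[R]_n := \matrix_(i, j) A i j.
Definition cv {n} (x : vec n) : 'cV[R]_n := \col_i x i.
Definition rows {n k} (w : 'I_k -> vec n) : 'M[R]_(k, n) := \matrix_(j, i) w j i.

Section Coordinates.
Variable n : nat.
Implicit Types (A B : mat n) (x y : vec n) (g h : isom n).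

Lemma mx_inj : injective (@mx n).
Proof.
move=> A B /matrixP eqAB; apply: functional_extensionality => i.
by apply: functional_extensionality => j; have := eqAB i j; rewrite !mxE.
Qed.

Lemma cv_inj : injective (@cv n).
Proof.
move=> x y /matrixP eqxy; apply: functional_extensionality => i.
by have := eqxy i 0; rewrite !mxE.
Qed.

Lemma mx_mulmm A B : mx (mulmm A B) = mx A *m mx B.
Proof.
by apply/matrixP => i j; rewrite !mxE /mulmm sumR_sum; apply: eq_bigr => l _; rewrite !mxE.
Qed.

Lemma mx_trm A : mx (trm A) = (mx A)^T.
Proof. by apply/matrixP => i j; rewrite !mxE. Qed.

Lemma mx_idm : mx (idm n) = 1%:M.
Proof. by apply/matrixP => i j; rewrite !mxE /idm; case: (i == j). Qed.

Lemma cv_mulmv A x : cv (mulmv A x) = mx A *m cv x.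
Proof.
by apply/matrixP => i j; rewrite !mxE /mulmv sumR_sum; apply: eq_bigr => l _; rewrite !mxE.
Qed.

Lemma cv_vadd x y : cv (vadd x y) = cv x + cv y.
Proof. by apply/matrixP => i j; rewrite !mxE. Qed.

Lemma cv_vsub x y : cv (vsub x y) = cv x - cv y.
Proof. by apply/matrixP => i j; rewrite !mxE. Qed.

Lemma cv_lin_comb k (w : 'I_k -> vec n) (t : 'rV[R]_k) :
  cv (lin_comb w (t 0)) = (t *m rows w)^T.
Proof.
by apply/colP => i; rewrite !mxE /lin_comb sumR_sum; apply: eq_bigr => j _; rewrite !mxE.
Qed.

Lemma orthogonalE A : Defs.orthogonal A <-> (mx A)^T *m mx A = 1%:M.
Proof. by rewrite /Defs.orthogonal -mx_trm -mx_mulmm -mx_idm; split=> [->|/mx_inj]. Qed.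

Lemma cv_act g x : cv (act g x) = mx g.1 *m cv x + cv g.2.
Proof. by rewrite cv_vadd cv_mulmv. Qed.

Lemma isom_eq g h : mx g.1 = mx h.1 -> cv g.2 = cv h.2 -> g = h.
Proof. by case: g h => [A a] [B b] /= /mx_inj-> /cv_inj->. Qed.

Lemma trm_idm : trm (idm n) = idm n.
Proof. by apply: mx_inj; rewrite mx_trm mx_idm trmx1. Qed.

Lemma mulmm_idm A : mulmm A (idm n) = A.
Proof. by apply: mx_inj; rewrite mx_mulmm mx_idm mulmx1. Qed.

Lemma mx_comp g h : mx (Defs.comp g h).1 = mx g.1 *m mx h.1.
Proof. exact: mx_mulmm. Qed.

Lemma cv_comp g h : cv (Defs.comp g h).2 = mx g.1 *m cv h.2 + cv g.2.
Proof. exact: cv_act. Qed.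

Lemma mx_inv g : mx (Defs.inv g).1 = (mx g.1)^T.
Proof. exact: mx_trm. Qed.

Lemma cv_inv g : cv (Defs.inv g).2 = - ((mx g.1)^T *m cv g.2).
Proof. by rewrite -mx_trm -cv_mulmv; apply/colP => i; rewrite !mxE. Qed.

Lemma act_comp g h x : act (Defs.comp g h) x = act g (act h x).
Proof. by apply: cv_inj; rewrite !cv_act mx_comp mulmxDr !mulmxA addrA. Qed.

Lemma comp_assoc g h f : Defs.comp (Defs.comp g h) f = Defs.comp g (Defs.comp h f).
Proof.
apply: isom_eq; first by rewrite !mx_comp mulmxA.
by rewrite !cv_comp mx_comp mulmxDr mulmxA addrA.
Qed.

Lemma comp_inv g : in_En g -> Defs.comp g (Defs.inv g) = iso_id n.
Proof.
move/orthogonalE/mulmx1C => gK; apply: isom_eq; first by rewrite mx_comp mx_inv gK -mx_idm.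
rewrite cv_comp cv_inv mulmxN mulmxA gK mul1mx addNr.
by apply/colP => i; rewrite !mxE.
Qed.

Lemma comp_id_l g : Defs.comp (iso_id n) g = g.
Proof.
apply: isom_eq; first by rewrite mx_comp [mx (iso_id n).1]mx_idm mul1mx.
by rewrite cv_comp [mx (iso_id n).1]mx_idm mul1mx; apply/colP => i; rewrite !mxE addr0.
Qed.

Lemma sumR_sq_cv x : sumR (fun i => x i * x i) = ((cv x)^T *m cv x) 0 0.
Proof. by rewrite !mxE sumR_sum; apply: eq_bigr => i _; rewrite !mxE. Qed.

Lemma vnorm_act_sub g y z : in_En g -> vnorm (vsub (act g y) (act g z)) = vnorm (vsub y z).
Proof.
move/orthogonalE => gK; rewrite /vnorm !sumR_sq_cv.
have -> : cv (vsub (act g y) (act g z)) = mx g.1 *m cv (vsub y z).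
  by rewrite !cv_vsub !cv_act mulmxBr opprD addrACA subrr addr0.
by rewrite trmx_mul -mulmxA (mulmxA (mx g.1)^T) gK mul1mx.
Qed.

End Coordinates.

Section Cocompact.
Local Open Scope R_scope.
Variable n : nat.
Implicit Types x y : vec n.

Lemma sumR_sq_ge0 x : 0 <= sumR (fun i => x i * x i).
Proof. by rewrite /sumR; elim: (enum _) => [|i l IH] /=; nra. Qed.

Lemma sumR_sq_vadd_le x y :
  sumR (fun i => vadd x y i * vadd x y i)
  <= 2 * sumR (fun i => x i * x i) + 2 * sumR (fun i => y i * y i).
Proof.
rewrite /sumR /vadd; elim: (enum _) => [|i l IH] /=; first lra.
by have := Rle_0_sqr (x i - y i); rewrite /Rsqr; nra.
Qed.

Lemma vnorm_vadd_le x y : vnorm (vadd x y) <= 2 * (vnorm x + vnorm y).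
Proof.
have := sumR_sq_vadd_le x y; rewrite /vnorm.
have := sqrt_sqrt _ (sumR_sq_ge0 x); have := sqrt_sqrt _ (sumR_sq_ge0 y).
have := sqrt_pos (sumR (fun i => x i * x i)); have := sqrt_pos (sumR (fun i => y i * y i)).
set a := sqrt _; set b := sqrt _ => b0 a0 bb aa le_sum.
rewrite -[2 * _]sqrt_square; first by apply: sqrt_le_1_alt; nra.
lra.
Qed.

Lemma cocompact_quotient_two_cosets (H K : isom n -> Prop) (V : vec n -> Prop) h0 :
  in_En (Defs.inv h0) -> (forall y, V y -> V (act (Defs.inv h0) y)) ->
  (forall g, H g -> K g \/ K (Defs.comp (Defs.inv h0) g)) ->
  cocompact_quotient H V -> cocompact_quotient K V.
Proof.
move=> inv_h0_En inv_h0_V cover [x0 [r Hr]].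
have c0 : 0 <= vnorm (vsub (act (Defs.inv h0) x0) x0) := sqrt_pos _.
exists x0, (2 * (r + vnorm (vsub (act (Defs.inv h0) x0) x0))) => x Vx.
have [g [Hg [Vgx gx_near]]] := Hr x Vx.
have r0 : 0 <= r := Rle_trans _ _ _ (sqrt_pos _) gx_near.
have [Kg|Kg] := cover g Hg; first by exists g; split; [|split=> //; lra].
exists (Defs.comp (Defs.inv h0) g); split=> //; rewrite act_comp; split; first exact: inv_h0_V.
rewrite (_ : vsub _ x0 = vadd (vsub (act (Defs.inv h0) (act g x)) (act (Defs.inv h0) x0))
                             (vsub (act (Defs.inv h0) x0) x0)).
  by apply: Rle_trans (vnorm_vadd_le _ _) _; rewrite vnorm_act_sub //; lra.
by apply: functional_extensionality => i; rewrite /vadd /vsub; ring.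
Qed.

End Cocompact.

Lemma translation_fixes_directions n k (g : isom n) (p v : vec n) (w : 'I_k -> vec n) :
  (forall t, act g (vadd p (lin_comb w t)) = vadd (vadd p (lin_comb w t)) v) ->
  rows w *m (mx g.1)^T = rows w.
Proof.
move=> g_transl; have fix_comb (t : 'rV_k) : mx g.1 *m (t *m rows w)^T = (t *m rows w)^T.
  have := congr1 cv (g_transl ((0 : 'rV_k) 0)); have := congr1 cv (g_transl (t 0)).
  rewrite !cv_act !cv_vadd !cv_lin_comb mul0mx trmx0 !addr0 mulmxDr => Et E0.
  by apply: (addrI (mx g.1 *m cv p + cv g.2)); rewrite addrAC Et E0 addrAC.
apply/row_matrixP => j; rewrite row_mul rowE -[X in X = _]trmxK trmx_mul trmxK.
by rewrite fix_comb trmxK.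
Qed.

Lemma translation_pair_ort_eq n k (G H : isom n -> Prop) (V : vec n -> Prop) g h :
  cocompact_translation_pair G H V -> affine_subspace_of_dim V k -> (n <= k.+1)%N ->
  H g -> H h -> ort g <> idm n -> ort h <> idm n -> ort g = ort h.
Proof.
case=> [[HEn _] [_ [_ [Htransl _]]]] [p [w [w_indep Vdesc]]] hk Hg Hh ng nh.
have /eqP rank_w : row_free (rows w).
  rewrite -kermx_eq0; apply/rowV0P => t /sub_kermxP tw0.
  apply/rowP => j; rewrite mxE; apply: w_indep j; apply: cv_inj.
  by rewrite cv_lin_comb tw0; apply/colP => i; rewrite !mxE.
have fix_w f : H f -> rows w *m (mx f.1)^T = rows w.
  move=> Hf; have [_ [_ [v fv]]] := Htransl f Hf.
  by apply: translation_fixes_directions => t; apply: fv; apply/Vdesc; exists t.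
have orth f : H f -> (mx f.1)^T *m (mx f.1)^T^T = 1%:M.
  by move=> Hf; rewrite trmxK; apply/orthogonalE/HEn.
have neq1 f : ort f <> idm n -> (mx f.1)^T != 1%:M.
  by move=> nf; apply/eqP => /(congr1 trmx); rewrite trmxK trmx1 -mx_idm => /mx_inj.
apply/mx_inj/trmx_inj; apply: (orthogonal_fix_eq _ (orth g Hg) (orth h Hh) (fix_w g Hg)
  (fix_w h Hh) (neq1 g ng) (neq1 h nh)).
by rewrite rank_w.
Qed.

Lemma transl_subgroup_is_subgroup n (H : isom n -> Prop) :
  is_subgroup H -> is_subgroup (transl_subgroup H).
Proof.
case=> HEn [H1 [Hcomp Hinv]]; split; first by move=> g [/HEn].
split=> //; split=> [g h [Hg og] [Hh oh]|g [Hg og]]; split; auto.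
  by move: og oh; rewrite /ort /= => -> ->; rewrite mulmm_idm.
by move: og; rewrite /ort /= => ->; rewrite trm_idm.
Qed.

Lemma transl_subgroup_two_cosets n k (G H : isom n -> Prop) (V : vec n -> Prop) :
  cocompact_translation_pair G H V -> affine_subspace_of_dim V k -> (n <= k.+1)%N ->
  exists h0, H h0 /\ forall g, H g ->
    transl_subgroup H g \/ transl_subgroup H (Defs.comp (Defs.inv h0) g).
Proof.
move=> pairHV dimV hk; have [[HEn [H1 [Hcomp Hinv]]] _] := pairHV.
have [[h0 [Hh0 nh0]]|all_transl] := classic (exists h0, H h0 /\ ort h0 <> idm n).
  exists h0; split=> // g Hg; have [og|ng] := classic (ort g = idm n); [by left | right].
  split; first by apply: Hcomp => //; apply: Hinv.
  have E : g.1 = h0.1 by symmetry; exact: translation_pair_ort_eq pairHV dimV hk Hh0 Hg nh0 ng.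
  by rewrite /ort /= E; apply: HEn.
exists (iso_id n); split=> // g Hg; left; split=> //.
by apply: NNPP => ng; apply: all_transl; exists g.
Qed.

Lemma cocompact_translation_pair_transl n (G H : isom n -> Prop) (V : vec n -> Prop) h0 :
  cocompact_translation_pair G H V -> H h0 ->
  (forall g, H g -> transl_subgroup H g \/ transl_subgroup H (Defs.comp (Defs.inv h0) g)) ->
  cocompact_translation_pair (transl_subgroup G) (transl_subgroup H) V.
Proof.
case=> HS [HG [Vaff [Htransl Hcoc]]] Hh0 cover; have [HEn [_ [_ Hinv]]] := HS.
split; first exact: transl_subgroup_is_subgroup.
split; first by move=> g [/HG].
split=> //; split; first by move=> g [/Htransl].
apply: cocompact_quotient_two_cosets cover Hcoc; first exact: HEn (Hinv _ Hh0).
by move=> y; apply: (Htransl _ (Hinv _ Hh0)).1.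
Qed.

Lemma finite_index_two_cosets n (G H K : isom n -> Prop) h0 :
  is_subgroup G -> (forall g, H g -> G g) -> H h0 ->
  (forall g, H g -> K g \/ K (Defs.comp (Defs.inv h0) g)) ->
  finite_index G H -> finite_index G K.
Proof.
move=> [GEn [_ [Gcomp _]]] HG Hh0 cover [l [lG lcover]].
exists (l ++ map (fun g => Defs.comp g h0) l); split.
  move=> g /(in_app_or _ _ _)[/lG //|/in_map_iff[g' [<- /lG Gg']]]; exact: Gcomp Gg' (HG _ Hh0).
move=> f /lcover[g [lg [h [Hh ->]]]]; have [Kh|Kh] := cover h Hh.
  by exists g; split; [apply: in_or_app; left | exists h].
exists (Defs.comp g h0); split.
  by apply: in_or_app; right; exact: (List.in_map (fun g => Defs.comp g h0)).
exists (Defs.comp (Defs.inv h0) h); split=> //.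
by rewrite comp_assoc -(comp_assoc h0) comp_inv ?comp_id_l //; exact: GEn (HG _ Hh0).
Qed.

Lemma finite_index_transl n (G K : isom n -> Prop) :
  (forall g, K g -> ort g = idm n) -> finite_index G K -> finite_index (transl_subgroup G) K.
Proof.
move=> Ktransl [l [lG lcover]].
pose in_GT g := if excluded_middle_informative (transl_subgroup G g) then true else false.
exists (filter in_GT l); split=> [g /filter_In[_]|f [Gf of1]].
  by rewrite /in_GT; case: excluded_middle_informative.
have [g [lg [h [Kh fE]]]] := lcover f Gf; exists g; split; last by exists h.
apply/filter_In; split=> //; rewrite /in_GT; case: excluded_middle_informative => // [[]].
split; first exact: lG.
by move: of1 (Ktransl h Kh); rewrite fE /ort /= => + oh; rewrite oh mulmm_idm.
Qed.

Theorem mainTheorem11 (n : nat) (G : isom n -> Prop) :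
  is_subgroup G -> discrete G ->
  forall k : nat, has_dim G k -> (n <= k.+1)%N -> has_dim (transl_subgroup G) k.
Proof.
(* Discreteness only serves, in the paper, to make [dim] well defined; here the dimension
   is witnessed by an explicit pair. *)
move=> HG _ k [H [V [pairHV [finGH dimV]]]] hk.
have [h0 [Hh0 cover]] := transl_subgroup_two_cosets pairHV dimV hk.
exists (transl_subgroup H), V; split; first exact: cocompact_translation_pair_transl cover.
split=> //; apply: finite_index_transl => [g [] //|].
by apply: finite_index_two_cosets HG _ Hh0 cover finGH; case: pairHV => _ [].
Qed.
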